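(* For every integer $m\ge 0$, there exist an NFA with $m+1$ states and a DFA with two states, both over an alphabet of cardinality $m+1$, such that there is a tower of height $2^{m+1}$ between their languages and there is no infinite tower between their languages.
   Context: For strings $v=a_1\cdots a_k$ and $w$, $v\preccurlyeq w$ if $w\in\Sigma^*a_1\Sigma^*a_2\Sigma^*\cdots\Sigma^*a_k\Sigma^*$. A sequence $(w_i)_{i=1}^r$ of strings is a tower between languages $K$ and $L$ if $w_1\in K\cup L$ and for all $i=1,\dots,r-1$: $w_i\preccurlyeq w_{i+1}$, $w_i\in K$ implies $w_{i+1}\in L$, and $w_i\in L$ implies $w_{i+1}\in K$; $r$ is its height. An infinite tower is an infinite sequence with the same properties. *)

From mathcomp Require Import all_boot.
Set Implicit Arguments. Unset Strict Implicit. Unset Printing Implicit Defensive.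

(* Words over an alphabet A are [seq A].  The subsequence (scattered subword)
   order  v ≼ w  is MathComp's [subseq v w]. *)

Record nfa (A : finType) (n : nat) := NFA {
  nfa_init  : {set 'I_n};
  nfa_final : {set 'I_n};
  nfa_trans : 'I_n -> A -> {set 'I_n}
}.

Definition nfa_run (A : finType) n (M : nfa A n) (S : {set 'I_n}) (w : seq A)
  : {set 'I_n} :=
  foldl (fun (S : {set 'I_n}) (a : A) => \bigcup_(q in S) nfa_trans M q a) S w.

Definition nfa_lang (A : finType) n (M : nfa A n) (w : seq A) : Prop :=
  [exists q in nfa_run M (nfa_init M) w, q \in nfa_final M].

Record dfa (A : finType) (n : nat) := DFA {
  dfa_init  : 'I_n;
  dfa_final : {set 'I_n};
  dfa_trans : 'I_n -> A -> 'I_n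
}.

Definition dfa_run (A : finType) n (M : dfa A n) (q : 'I_n) (w : seq A) : 'I_n :=
  foldl (dfa_trans M) q w.

Definition dfa_lang (A : finType) n (M : dfa A n) (w : seq A) : Prop :=
  dfa_run M (dfa_init M) w \in dfa_final M.

Definition tower_step (A : eqType) (K L : seq A -> Prop) (u v : seq A) : Prop :=
  subseq u v /\ (K u -> L v) /\ (L u -> K v).

(* A (finite) tower w_1, ..., w_r between K and L; its height is [size ws]. *)
Definition is_tower (A : eqType) (K L : seq A -> Prop) (ws : seq (seq A)) : Prop :=
  0 < size ws /\
  (K (nth [::] ws 0) \/ L (nth [::] ws 0)) /\
  forall i, i.+1 < size ws -> tower_step K L (nth [::] ws i) (nth [::] ws i.+1).

Definition is_inf_tower (A : eqType) (K L : seq A -> Prop) (w : nat -> seq A) : Prop :=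
  (K (w 0) \/ L (w 0)) /\ forall i, tower_step K L (w i) (w i.+1).

From mathcomp Require Import all_boot.
From mathcomp Require Import zify.
Set Implicit Arguments. Unset Strict Implicit. Unset Printing Implicit Defensive.

(* The NFA over the letters 0..m has states 0..m, all initial, and 0 as only
   final state; in state q a letter below q loops and the letter q jumps to
   any smaller state.  Its words are thus X_1 q_1 ... X_r q_r with
   m >= q_1 > ... > q_r >= 1 and all letters of X_i below q_i, and reading the
   markers q_i as the binary number sum 2^q_i gives a potential below 2^(m+1).
   The DFA accepts the words ending in 0, which the NFA never accepts.
   If x <= z <= y (as subsequences) with x, y accepted by the NFA and z ending
   in 0, the potential of y is larger than that of x: either y has the larger
   leading marker, or both share it, its first occurrence in z splits z, and
   the tails after that marker are again in this situation.  So an infinite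
   tower would make the potential increase forever.  On the other hand the
   2^(m+1) prefixes of the ruler word u_m, where u_0 = 0 and
   u_(k+1) = u_k (k+1) u_k, alternate between the two languages. *)

Section Towers.
Variables (A : eqType) (K L : seq A -> Prop).

Lemma is_tower_prefixes (U : seq A) :
  (forall w, K w -> L w -> False) ->
  (forall i, i <= size U -> if odd i then L (take i U) else K (take i U)) ->
  is_tower K L (mkseq (take^~ U) (size U).+1).
Proof.
move=> KL_disj parityP; rewrite /is_tower size_mkseq; split=> //; split.
  by left; rewrite nth_mkseq //; exact: (parityP 0).
move=> i lt_i1; rewrite !nth_mkseq ?(ltnW lt_i1) //; split.
  by rewrite -(take_takel U (leqnSn i)) take_subseq.
have := parityP i (ltnW lt_i1); have := parityP i.+1 lt_i1; rewrite /=.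
case: (odd i) => /= Pi1 Pi; split=> // P'i; exfalso.
  exact: KL_disj P'i Pi.
exact: KL_disj Pi P'i.
Qed.

Lemma no_inf_tower_of_potential (f : seq A -> nat) (B : nat) :
  (forall w, K w -> f w < B) ->
  (forall x z y, K x -> subseq x z -> L z -> subseq z y -> K y -> f x < f y) ->
  ~ exists w, is_inf_tower K L w.
Proof.
move=> f_bounded f_increasing [w [w0P stepP]].
have K_step2 i : K (w i) -> K (w i.+2) /\ f (w i) < f (w i.+2).
  move=> Kwi; have [sub1 [KL1 _]] := stepP i; have [sub2 [_ LK2]] := stepP i.+1.
  have Lwi1 := KL1 Kwi; split; first exact: LK2.
  exact: f_increasing sub1 Lwi1 sub2 (LK2 Lwi1).
have [i0 Kwi0] : exists i0, K (w i0).
  by case: w0P => [Kw0|Lw0]; [exists 0 | exists 1; apply: (stepP 0).2.2].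
have climb n : K (w (i0 + n.*2)) /\ n <= f (w (i0 + n.*2)).
  elim: n => [|n [Kn le_n]]; first by rewrite addn0.
  have [Kn2 lt_f] := K_step2 _ Kn.
  by rewrite doubleS !addnS; split; last exact: leq_ltn_trans lt_f.
have [KB le_B] := climb B.
by move: (f_bounded _ KB); rewrite ltnNge le_B.
Qed.

End Towers.

Lemma subseq_after_first (T : eqType) (c : T) (s1 s2 t : seq T) :
  c \notin t -> subseq (c :: s1) (t ++ c :: s2) -> subseq s1 s2.
Proof.
elim: t => [|b t IHt] /=; first by rewrite eqxx.
by rewrite inE negb_or eq_sym => /andP[/negbTE -> /IHt].
Qed.

Lemma split_at_first (T : eqType) (c : T) (s : seq T) :
  c \in s -> exists s1 s2, s = s1 ++ c :: s2 /\ c \notin s1.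
Proof.
move=> cs; exists (take (index c s) s), (drop (index c s).+1 s).
by rewrite -drop_index // cat_take_drop in_take_leq ?index_size // ltnn.
Qed.

Lemma rcons_suffix (T : eqType) (c b : T) s s1 s2 :
  rcons s c = s1 ++ b :: s2 -> b != c -> exists s', s2 = rcons s' c.
Proof.
case/lastP: s2 => [|s2 d].
  by rewrite cats1 => /rcons_inj[_ ->]; rewrite eqxx.
by rewrite -rcons_cons -rcons_cat => /rcons_inj[_ <-] _; exists s2.
Qed.

Section CounterAutomata.
Variable m : nat.
Local Notation letter := 'I_m.+1.

Definition maxl (w : seq letter) : nat := \max_(a <- w) a.

Fixpoint acc_from (q : nat) (w : seq letter) : bool :=
  match w with
  | [::] => q == 0
  | a :: w' =>
    if a < q then acc_from q w'
    else (a == q :> nat) && [exists j : letter, (j < q) && acc_from j w']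
  end.

Fixpoint weight (q : nat) (w : seq letter) : nat :=
  match w with
  | [::] => 0
  | a :: w' => if a < q then weight q w' else 2 ^ q + weight (maxl w') w'
  end.

Definition potential (w : seq letter) : nat := weight (maxl w) w.

Definition counter_trans (q a : letter) : {set letter} :=
  if a < q then [set q]
  else if a == q :> nat then [set j : letter | j < q] else set0.

Definition counter_nfa : nfa letter m.+1 := NFA setT [set ord0] counter_trans.

Definition last0_dfa : dfa letter 2 :=
  DFA ord0 [set ord_max] (fun _ (a : letter) => if a == 0 :> nat then ord_max else ord0).

Lemma counter_nfa_run S w :
  (ord0 \in nfa_run counter_nfa S w) = [exists q in S, acc_from q w].
Proof.
elim: w S => [|a w IHw] S /=.
  apply/idP/existsP => [S0|[q /andP[Sq /eqP q0]]]; first by exists ord0; rewrite S0.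
  by rewrite (_ : ord0 = q) //; apply: val_inj.
rewrite /nfa_run /= -/(nfa_run _ _ _) IHw.
apply/existsP/existsP => [[j /andP[/bigcupP[q Sq]]]|[q /andP[Sq]]].
  rewrite /= /counter_trans => qj accj; exists q; rewrite Sq /=.
  case: ifP qj => [_|_]; first by rewrite inE => /eqP <-.
  case: ifP => _; last by rewrite inE.
  by rewrite inE => lt_jq; apply/existsP; exists j; rewrite lt_jq.
case: ifP => [lt_aq accq|ge_aq /andP[eq_aq /existsP[j /andP[lt_jq accj]]]].
  exists q; rewrite accq andbT; apply/bigcupP; exists q => //.
  by rewrite /= /counter_trans lt_aq inE.
exists j; rewrite accj andbT; apply/bigcupP; exists q => //.
by rewrite /= /counter_trans ge_aq eq_aq inE.
Qed.

Lemma counter_nfa_langE w : nfa_lang counter_nfa w <-> exists q : letter, acc_from q w.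
Proof.
rewrite /nfa_lang; split.
  case/existsP=> q /andP[runq]; rewrite inE => /eqP q0; move: runq; rewrite q0.
  by rewrite counter_nfa_run => /existsP[p /andP[_ accp]]; exists p.
case=> q accq; apply/existsP; exists ord0; rewrite inE eqxx andbT counter_nfa_run.
by apply/existsP; exists q; rewrite inE.
Qed.

Lemma last0_dfa_langE w : dfa_lang last0_dfa w <-> exists s, w = rcons s ord0.
Proof.
rewrite /dfa_lang; case/lastP: w => [|s a]; first by split; [rewrite inE | case=> [[]]].
rewrite /dfa_run foldl_rcons /= inE; split.
  case: ifP => [/eqP a0 _|_]; last by rewrite eqE.
  by exists s; congr rcons; apply: val_inj.
by case=> s' /eqP; rewrite eqseq_rcons => /andP[_ /eqP ->]; rewrite eqxx.
Qed.

Lemma maxl_cons a w : maxl (a :: w) = maxn a (maxl w).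
Proof. exact: big_cons. Qed.

Lemma maxl_subseq x y : subseq x y -> maxl x <= maxl y.
Proof.
move=> sub_xy; apply/bigmax_leqP_seq => a xa _.
exact: leq_bigmax_seq (mem_subseq sub_xy xa) _.
Qed.

Lemma maxl_le_m w : maxl w <= m.
Proof. by apply/bigmax_leqP_seq => a _ _; rewrite -ltnS. Qed.

Lemma acc_from_maxl q w : acc_from q w -> maxl w = q.
Proof.
elim: w q => [|a w IHw] q /=; first by move/eqP->; rewrite /maxl big_nil.
rewrite maxl_cons; case: ifP => [lt_aq /IHw ->|_].
  exact/maxn_idPr/ltnW.
case/andP=> /eqP-> /existsP[j /andP[lt_jq /IHw ->]].
exact/maxn_idPl/ltnW.
Qed.

Lemma acc_from0 w : acc_from 0 w -> w = [::].
Proof. by case: w => [|a w] //= /andP[_ /existsP[]]. Qed.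

Lemma acc_from_last q a w : acc_from q (a :: w) -> 0 < last a w.
Proof.
elim: w q a => [|b w IHw] q a /=.
  case: ifP => [lt_aq /eqP q0|_ /andP[/eqP-> /existsP[j /andP[lt_jq _]]]].
    by rewrite q0 in lt_aq.
  exact: leq_ltn_trans lt_jq.
by case: ifP => [_ /IHw|_ /andP[_ /existsP[j /andP[_ /IHw]]]].
Qed.

Lemma counter_nfa_lang_maxl w : nfa_lang counter_nfa w -> acc_from (maxl w) w.
Proof. by case/counter_nfa_langE=> q accq; rewrite (acc_from_maxl accq). Qed.

Lemma counter_last0_disjoint w :
  nfa_lang counter_nfa w -> dfa_lang last0_dfa w -> False.
Proof.
move=> /counter_nfa_langE[q accq] /last0_dfa_langE[s def_w]; subst w.
case: s accq => [|a s] /acc_from_last //=.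
by rewrite last_rcons.
Qed.

Lemma weight_lt q w : acc_from q w -> weight q w < 2 ^ q.+1.
Proof.
elim: w q => [|a w IHw] q /=; first by rewrite expn_gt0.
case: ifP => [_ /IHw //|_ /andP[_ /existsP[j /andP[lt_jq accj]]]].
rewrite (acc_from_maxl accj); have := IHw _ accj.
have : 2 ^ j.+1 <= 2 ^ q by rewrite leq_exp2l.
rewrite !expnS; lia.
Qed.

Lemma potential_lt_pow w : nfa_lang counter_nfa w -> potential w < 2 ^ m.+1.
Proof.
move/counter_nfa_lang_maxl/weight_lt/leq_trans; apply.
by rewrite leq_exp2l // ltnS maxl_le_m.
Qed.

Lemma acc_from_decomp q w : 0 < q -> acc_from q w ->
  exists X a Y, [/\ w = X ++ a :: Y, a = q :> nat, all (fun b : letter => b < q) X,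
                    acc_from (maxl Y) Y & weight q w = 2 ^ q + potential Y].
Proof.
move=> q_gt0; elim: w => [|a w IHw] /=; first by move/eqP=> q0; rewrite q0 in q_gt0.
case: ifP => [lt_aq /IHw[X [b [Y [-> eq_bq allX accY wY]]]]|_].
  by exists (a :: X), b, Y; rewrite /= lt_aq.
case/andP=> /eqP eq_aq /existsP[j /andP[_ accj]].
by exists [::], a, w; rewrite /potential (acc_from_maxl accj).
Qed.

Lemma potential_ge y : acc_from (maxl y) y -> y != [::] ->
  0 < maxl y /\ 2 ^ maxl y <= potential y.
Proof.
move=> accy y_nil; have maxl_gt0 : 0 < maxl y.
  by rewrite lt0n; apply: contra_neq y_nil => maxl0; apply: acc_from0; rewrite -maxl0.
have [X [a [Y [_ _ _ _ wY]]]] := acc_from_decomp maxl_gt0 accy.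
by rewrite /potential wY leq_addr.
Qed.

Lemma potential_lt_through_last0 x z y s :
  acc_from (maxl x) x -> acc_from (maxl y) y ->
  subseq x z -> subseq z y -> z = rcons s ord0 -> potential x < potential y.
Proof.
have [n] := ubnP (size y); elim: n => // n IHn in x y z s *.
move=> lt_y_n accx accy sub_xz sub_zy def_z.
have y_nil : y != [::].
  by apply: contraTneq sub_zy => ->; rewrite subseq0 def_z -size_eq0 size_rcons.
have [maxly_gt0 pot_y] := potential_ge accy y_nil.
have [->|x_nil] := eqVneq x [::]; first by apply: leq_trans pot_y; rewrite expn_gt0.
have [maxlx_gt0 _] := potential_ge accx x_nil.
have le_maxl : maxl x <= maxl y by apply/maxl_subseq/(subseq_trans sub_xz).
have [lt_maxl|ge_maxl] := ltnP (maxl x) (maxl y).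
  apply: leq_trans (weight_lt accx) _; apply: leq_trans pot_y.
  by rewrite leq_exp2l.
have eq_maxl : maxl x = maxl y by apply/eqP; rewrite eqn_leq le_maxl.
have [X1 [a [X2 [def_x eq_a _ accX2 pot_x]]]] := acc_from_decomp maxlx_gt0 accx.
have [Y1 [b [Y2 [def_y eq_b allY1 accY2 pot_y']]]] := acc_from_decomp maxly_gt0 accy.
have {eq_b} eq_ba : b = a by apply: val_inj; rewrite /= eq_a eq_b eq_maxl.
subst b.
have [Z1 [Z2 [def_z' aZ1]]] : exists Z1 Z2, z = Z1 ++ a :: Z2 /\ a \notin Z1.
  by apply/split_at_first/(mem_subseq sub_xz); rewrite def_x mem_cat mem_head orbT.
have sub_X2Z2 : subseq X2 Z2.
  apply: subseq_after_first aZ1 _; rewrite -def_z'.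
  by apply: subseq_trans sub_xz; rewrite def_x suffix_subseq.
have sub_Z2Y2 : subseq Z2 Y2.
  apply: (@subseq_after_first _ a _ _ Y1).
    by apply/negP => /(allP allY1); rewrite -eq_maxl -eq_a ltnn.
  by rewrite -def_y; apply: subseq_trans sub_zy; rewrite def_z' suffix_subseq.
have [s' def_Z2] : exists s', Z2 = rcons s' ord0.
  apply: (@rcons_suffix _ _ a s Z1); first by rewrite -def_z -def_z'.
  by rewrite -val_eqE /= eq_a -lt0n.
rewrite /potential pot_x pot_y' eq_maxl ltn_add2l.
apply: IHn accX2 accY2 sub_X2Z2 sub_Z2Y2 def_Z2.
by move: lt_y_n; rewrite def_y size_cat /=; lia.
Qed.

Fixpoint ruler (k : nat) : seq letter :=
  if k is k'.+1 then ruler k' ++ inord k :: ruler k' else [:: ord0].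

Lemma size_ruler k : (size (ruler k)).+1 = 2 ^ k.+1.
Proof. by elim: k => //= k IHk; rewrite size_cat /= expnS -IHk; lia. Qed.

Lemma ruler_letters k : k <= m -> all (fun b : letter => b <= k) (ruler k).
Proof.
elim: k => [|k IHk] lt_km //=; have := IHk (ltnW lt_km).
rewrite all_cat /= inordK // leqnn => /allP le_k.
by apply/andP; split; apply/allP => b /le_k /leqW.
Qed.

Lemma acc_from_catl q X Y :
  all (fun b : letter => b < q) X -> acc_from q (X ++ Y) = acc_from q Y.
Proof. by elim: X => //= b X IHX /andP[-> /IHX]. Qed.

Lemma ruler_prefix k i : k <= m -> i <= size (ruler k) ->
  if odd i then dfa_lang last0_dfa (take i (ruler k))
  else nfa_lang counter_nfa (take i (ruler k)).
Proof.
elim: k i => [|k IHk] i le_km.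
  case: i => [|[|]] //= _; first by apply/counter_nfa_langE; exists ord0.
  by apply/last0_dfa_langE; exists [::].
set r := ruler k; rewrite /= size_cat /= -/r => le_i.
have [le_ir|lt_ri] := leqP i (size r).
  by rewrite takel_cat //; apply: IHk => //; apply: ltnW.
have [i' def_i] : exists i', i = (size r).+1 + i' by exists (i - (size r).+1); lia.
have le_i'r : i' <= size r by lia.
have odd_i : odd i = odd i' by rewrite def_i oddD size_ruler expnS oddM.
have take_i : take i (r ++ inord k.+1 :: r) = r ++ inord k.+1 :: take i' r.
  by rewrite take_cat ltnNge (ltnW lt_ri) /= def_i addSnnS addKn.
have := IHk i' (ltnW le_km) le_i'r; rewrite odd_i take_i; case: (odd i').
  case/last0_dfa_langE=> s ->; apply/last0_dfa_langE.
  by exists (r ++ inord k.+1 :: s); rewrite rcons_cat.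
case/counter_nfa_langE=> j accj; apply/counter_nfa_langE; exists (inord k.+1).
have le_rk := ruler_letters (ltnW le_km).
rewrite inordK // acc_from_catl /=; last by apply: sub_all le_rk => b; rewrite ltnS.
rewrite inordK // ltnn eqxx /=; apply/existsP; exists j; rewrite accj andbT ltnS.
rewrite -(acc_from_maxl accj); apply/bigmax_leqP_seq => b tb _.
exact: (allP le_rk) _ (mem_subseq (take_subseq _ _) tb).
Qed.

End CounterAutomata.

Theorem theorem9 (m : nat) :
  exists (N : nfa 'I_m.+1 m.+1) (D : dfa 'I_m.+1 2),
    (exists ws : seq (seq 'I_m.+1),
        size ws = 2 ^ m.+1 /\ is_tower (nfa_lang N) (dfa_lang D) ws) /\
    ~ (exists w : nat -> seq 'I_m.+1, is_inf_tower (nfa_lang N) (dfa_lang D) w).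
Proof.
exists (counter_nfa m), (last0_dfa m); split.
  exists (mkseq (take^~ (ruler m m)) (size (ruler m m)).+1).
  split; first by rewrite size_mkseq size_ruler.
  apply: is_tower_prefixes => [w|i]; first exact: counter_last0_disjoint.
  exact: ruler_prefix.
apply: (@no_inf_tower_of_potential _ _ _ (@potential m) (2 ^ m.+1)).
  exact: potential_lt_pow.
move=> x z y /counter_nfa_lang_maxl accx sub_xz /last0_dfa_langE[s def_z] sub_zy.
move/counter_nfa_lang_maxl=> accy.
exact: potential_lt_through_last0 accx accy sub_xz sub_zy def_z.
Qed.
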